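(* Let $p$ be a lattice norm on $\mathbb{R}^2$ with $p((1,0))=1$ and let $\Phi$ be an Orlicz function satisfying $\lim_{u\to+\infty}\Phi(u)/u=+\infty$. Then for every $x\in L^\Phi(\mu)\setminus\{0\}$ there exists $l\in(0,+\infty)$ such that $$\|x\|_{\Phi,p}=\frac1l\,p\big((1,I_\Phi(lx))\big).$$
   Context: $(\Omega,\Sigma,\mu)$ is a $\sigma$-finite complete measure space, $L^0$ the space of (classes of a.e. equal) real measurable functions. An Orlicz function is a function $\Phi:\mathbb{R}\to[0,\infty)$ which is convex, even, vanishes at $0$ and is not identically zero. $I_\Phi(x)=\int_\Omega\Phi(x(t))\,d\mu\in[0,+\infty]$; $L^\Phi(\mu)=\{x\in L^0: I_\Phi(\lambda x)<\infty\text{ for some }\lambda>0\}$. A lattice norm on $\mathbb{R}^2$ is a norm $p$ with $p((u,v))\le p((u',v'))$ whenever $|u|\le|u'|,|v|\le|v'|$. For such $p$ with $p((1,0))=1$, $\|x\|_{\Phi,p}=\inf_{k>0}\frac1k p((1,I_\Phi(kx)))$ for $x\in L^\Phi(\mu)$, with the convention $p((1,+\infty))=+\infty$. *)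

From HB Require Import structures.
From mathcomp Require Import all_boot all_order all_algebra.
From mathcomp Require Import all_classical all_reals all_analysis.
Set Implicit Arguments. Unset Strict Implicit. Unset Printing Implicit Defensive.
Import Order.TTheory GRing.Theory Num.Theory.
Local Open Scope classical_set_scope.
Local Open Scope ring_scope.

Definition orlicz_fun (R : realType) (Phi : R -> R) : Prop :=
  [/\ (forall (a x y : R), 0 <= a -> a <= 1 ->
         Phi (a * x + (1 - a) * y) <= a * Phi x + (1 - a) * Phi y),
      (forall x, Phi (- x) = Phi x),
      Phi 0 = 0 &
      exists x, Phi x != 0].

Definition lattice_norm (R : realType) (p : R * R -> R) : Prop :=
  [/\ (forall v, p v = 0 -> v = (0, 0)),
      (forall (a : R) v, p (a * v.1, a * v.2) = `|a| * p v),
      (forall v w, p (v.1 + w.1, v.2 + w.2) <= p v + p w) &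
      (forall u v u' v', `|u| <= `|u'| -> `|v| <= `|v'| -> p (u, v) <= p (u', v'))].

Definition orlicz_modular (R : realType) d (T : measurableType d)
  (mu : {measure set T -> \bar R}) (Phi : R -> R) (x : T -> R) : \bar R :=
  (\int[mu]_(t in setT) (Phi (x t))%:E)%E.

Definition in_orlicz_space (R : realType) d (T : measurableType d)
  (mu : {measure set T -> \bar R}) (Phi : R -> R) (x : T -> R) : Prop :=
  measurable_fun setT x /\
  exists lam : R, 0 < lam /\ (orlicz_modular mu Phi (fun t => (lam * x t)%R) < +oo)%E.

Definition p_ext (R : realType) (p : R * R -> R) (s : \bar R) : \bar R :=
  match s with
  | EFin r => (p (1, r))%:E
  | +oo%E => +oo%E
  | -oo%E => +oo%E (* never used: I_Phi >= 0 *)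
  end.

Definition orlicz_p_norm (R : realType) d (T : measurableType d)
  (mu : {measure set T -> \bar R}) (Phi : R -> R) (p : R * R -> R)
  (x : T -> R) : \bar R :=
  ereal_inf [set ((k^-1)%:E * p_ext p (orlicz_modular mu Phi (fun t => (k * x t)%R)))%E
            | k in [set k : R | 0 < k]].

(* F(k) = k^-1 p((1, I_Phi(k x))) is lower semicontinuous on (0, +oo): k |-> I_Phi(k x)
   is nondecreasing and, by monotone convergence along k (1 - 1/(n+1)), left continuous,
   while s |-> p((1, s)) is nondecreasing and continuous up to s = +oo.  F is also
   coercive at both ends of (0, +oo): F(k) >= 1/k since p((1, s)) >= p((1, 0)) = 1, and
   F(k) >= k^-1 p((0, 1)) Phi(k e) mu(|x| >= e), which tends to +oo because x is not
   a.e. zero and Phi(u)/u -> +oo.  A minimizing sequence therefore stays in a compact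
   interval [a, b] with a > 0, and lower semicontinuity at one of its cluster points
   shows that the infimum is attained there. *)

From HB Require Import structures.
From mathcomp Require Import all_boot all_order all_algebra.
From mathcomp Require Import all_classical all_reals all_analysis.
From mathcomp Require Import measurable_realfun ring lra.
Import Order.TTheory GRing.Theory Num.Theory numFieldNormedType.Exports.
Local Open Scope classical_set_scope.
Local Open Scope ring_scope.

Definition lower_semicontinuous_at {X : topologicalType} {R : numFieldType}
    (f : X -> \bar R) (x : X) :=
  forall c, (c%:E < f x)%E -> \forall y \near x, (c%:E < f y)%E.

Section lower_semicontinuous_real.
Context {R : realType}.
Implicit Types (f h : R -> \bar R) (a b c l : R).

Lemma lte_exists_fin r (y : \bar R) : (r%:E < y)%E -> exists2 c, r < c & (c%:E < y)%E.
Proof.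
case: y => [s||] //; last by exists (r + 1); rewrite ?ltey // ltrDl.
by rewrite lte_fin => rs; exists ((r + s) / 2); rewrite ?lte_fin; lra.
Qed.

Lemma nondecreasing_lower_semicontinuous_at h l :
  (forall j k, 0 <= j -> j <= k -> (h j <= h k)%E) ->
  (forall c, (c%:E < h l)%E -> exists2 j, 0 <= j < l & (c%:E < h j)%E) ->
  lower_semicontinuous_at h l.
Proof.
move=> ndh hl c /hl [j /andP[j0 jl] cj].
near=> k; apply: (lt_le_trans cj); apply: ndh => //.
by apply: ltW; near: k; exact: lt_nbhsr.
Unshelve. all: by end_near.
Qed.

Lemma lower_semicontinuous_atVM h l : 0 < l -> (forall k, 0 < k -> (0 < h k)%E) ->
  lower_semicontinuous_at h l ->
  lower_semicontinuous_at (fun k : R => (k^-1)%:E * h k)%E l.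
Proof.
move=> l0 h_gt0 hl c cl.
have k_gt0 : \forall k \near l, 0 < k by exact: lt_nbhsr.
have [c0|c0] := leP c 0.
  near=> k; have k0 : 0 < k by near: k.
  rewrite (@le_lt_trans _ _ 0%E) ?lee_fin // mule_gt0 ?h_gt0 //.
  by rewrite lte_fin invr_gt0.
move: cl; rewrite lte_pdivlMl // -EFinM => /lte_exists_fin [c' lc' c'h].
near=> k; rewrite lte_pdivlMl; last by near: k.
rewrite -EFinM (lt_trans _ (_ : c'%:E < h k)%E) //; last by near: k; exact: hl.
rewrite lte_fin -ltr_pdivlMr //; near: k; apply: lt_nbhsl.
by rewrite ltr_pdivlMr // mulrC.
Unshelve. all: by end_near.
Qed.

Lemma lower_semicontinuous_ereal_inf_attained f (S : set R) a b c :
  `[a, b] `<=` S ->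
  (forall l, a <= l <= b -> lower_semicontinuous_at f l) ->
  ereal_inf (f @` S) \is a fin_num -> (ereal_inf (f @` S) < c%:E)%E ->
  (forall k, S k -> (f k < c%:E)%E -> a <= k <= b) ->
  exists2 l, S l & ereal_inf (f @` S) = f l.
Proof.
move=> abS f_lsc; set m := ereal_inf _ => mfin mc f_lt_c.
have mE : m = (fine m)%:E by rewrite fineK.
have near_inf n : exists k,
    [/\ S k, (f k < c%:E)%E & (f k < (fine m + n.+1%:R^-1)%:E)%E].
  have e0 : 0 < Num.min (c - fine m) n.+1%:R^-1.
    by rewrite lt_min subr_gt0 -lte_fin -mE mc invr_gt0 ltr0n.
  have [_ [k Sk <-] fk] := lb_ereal_inf_adherent e0 mfin.
  rewrite -/m mE -EFinD in fk; exists k; split => //; apply: (lt_le_trans fk).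
    by rewrite lee_fin -lerBrDl ge_min lexx.
  by rewrite lee_fin lerD2l ge_min lexx orbT.
have [ks hks] := boolp.choice near_inf.
have [l [abl l_cl]] : `[a, b] `&` cluster (ks @ \oo) !=set0.
  apply: segment_compact; exists 0%N => // n _ /=.
  by have [Sk fk _] := hks n; rewrite in_itv /= f_lt_c.
have Sl : S l by exact: abS.
exists l => //; apply/eqP; rewrite eq_le ereal_inf_lbound /=; last by exists l.
rewrite leNgt; apply/negP; rewrite mE => /lte_exists_fin [c' mc' c'f].
have c'm : 0 < c' - fine m by rewrite subr_gt0.
have ks_lt_c' : \forall n \near \oo, (f (ks n) < c'%:E)%E.
  near=> n; have [_ _ fk] := hks n; apply: (lt_le_trans fk).
  rewrite lee_fin -lerBrDl ltW //; near: n.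
  exact: (near_infty_natSinv_lt (PosNum c'm)).
have [] := l_cl [set j | (f j < c'%:E)%E] [set j | (c'%:E < f j)%E] ks_lt_c'.
- by apply: f_lsc; move: abl; rewrite /= in_itv.
- by move=> j [/= fj c'j]; move: (lt_trans fj c'j); rewrite ltxx.
Unshelve. all: by end_near.
Qed.
End lower_semicontinuous_real.

Section lattice_norm.
Context {R : realType} {p : R * R -> R} (hp : lattice_norm p).

Lemma lattice_normZ a u v : p (a * u, a * v) = `|a| * p (u, v).
Proof. by case: hp => _ hom _ _; exact: (hom a (u, v)). Qed.

Lemma lattice_norm_le u v u' v' :
  `|u| <= `|u'| -> `|v| <= `|v'| -> p (u, v) <= p (u', v').
Proof. by case: hp => _ _ _; apply. Qed.

Lemma lattice_norm00 : p (0, 0) = 0.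
Proof. by have := lattice_normZ 0 0 0; rewrite mul0r normr0 mul0r. Qed.

Lemma lattice_norm_ge0 u v : 0 <= p (u, v).
Proof. by rewrite -lattice_norm00; apply: lattice_norm_le; rewrite normr0. Qed.

Lemma lattice_norm01_gt0 : 0 < p (0, 1).
Proof.
case: hp => p0 _ _ _; rewrite lt_neqAle lattice_norm_ge0 andbT.
by apply/eqP => /esym /p0 [] /eqP; rewrite oner_eq0.
Qed.

Lemma lattice_norm0r s : p (0, s) = `|s| * p (0, 1).
Proof. by rewrite -lattice_normZ mulr0 mulr1. Qed.

Lemma lattice_norm1r_le s s' : 0 <= s -> s <= s' -> p (1, s) <= p (1, s').
Proof.
move=> s0 ss'; apply: lattice_norm_le => //.
by rewrite !ger0_norm // (le_trans s0).
Qed.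

Lemma lattice_norm1r_ge s : 0 <= s -> s * p (0, 1) <= p (1, s).
Proof.
move=> s0; rewrite -(ger0_norm s0) -lattice_norm0r.
by apply: lattice_norm_le; rewrite ?normr0 ?normr1 ?normr_id.
Qed.

Lemma lattice_norm1r_lip s s' : s <= s' -> p (1, s') <= p (1, s) + (s' - s) * p (0, 1).
Proof.
case: hp => _ _ tri _ ss'.
have := tri (1, s) (0, s' - s); rewrite /= addr0 addrC subrK lattice_norm0r.
by rewrite ger0_norm // subr_ge0.
Qed.

Lemma p_ext_ge1 s : p (1, 0) = 1 -> (0 <= s)%E -> (1 <= p_ext p s)%E.
Proof.
move=> p10; case: s => [r||] //= r0; rewrite ?leey // lee_fin -{1}p10.
by apply: lattice_norm_le; rewrite ?normr0 ?normr_ge0.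
Qed.

Lemma p_ext_ge s : (0 <= s)%E -> ((p (0, 1))%:E * s <= p_ext p s)%E.
Proof.
case: s => [r||] //= r0; last by rewrite leey.
by rewrite -EFinM lee_fin mulrC lattice_norm1r_ge.
Qed.

Lemma p_ext_le s s' : (0 <= s)%E -> (s <= s')%E -> (p_ext p s <= p_ext p s')%E.
Proof.
case: s s' => [r||] [r'||] //=; rewrite ?lee_fin ?leey // => r0 rr'.
exact: lattice_norm1r_le.
Qed.

Lemma p_ext_gt_left c s : (0 <= s)%E -> (c%:E < p_ext p s)%E ->
  exists2 y, (y < s)%E & forall s', (y < s')%E -> (c%:E < p_ext p s')%E.
Proof.
have p01 := lattice_norm01_gt0.
case: s => [r||] //= r0 cr; last first.
  exists (`|c| / p (0, 1) + 1)%:E; first by rewrite ltey.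
  move=> [s'||] //=; rewrite ?ltey // lte_fin => ys'.
  have s'0 : 0 <= s'.
    by apply/ltW/(le_lt_trans _ ys'); rewrite addr_ge0 // divr_ge0 // ltW.
  have : `|c| < s' * p (0, 1) by rewrite -ltr_pdivrMr //; lra.
  have := (lattice_norm1r_ge _ s'0); have := ler_norm c; rewrite lte_fin; lra.
rewrite lte_fin in cr.
pose eta := (p (1, r) - c) / p (0, 1).
have eta0 : 0 < eta by rewrite divr_gt0 // subr_gt0.
exists (r - eta)%:E; first by rewrite lte_fin ltrBlDr ltrDl.
move=> [s'||] //=; rewrite ?ltey // !lte_fin => ys'.
have [s'r|rs'] := leP s' r; last first.
  by apply: (lt_le_trans cr); apply: lattice_norm1r_le => //; exact: ltW.
have := lattice_norm1r_lip _ _ s'r.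
have : (r - s') * p (0, 1) < p (1, r) - c.
  by rewrite -ltr_pdivlMr //; move: ys'; rewrite -/eta; lra.
lra.
Qed.
End lattice_norm.

Section ramp1.
Context {R : realType}.

Definition ramp1 (n : nat) : R := 1 - n.+1%:R^-1.

Lemma ramp1_ge0 n : 0 <= ramp1 n.
Proof. by rewrite subr_ge0 invf_le1 // ler1n. Qed.

Lemma ramp1_lt1 n : ramp1 n < 1.
Proof. by rewrite ltrBlDr ltrDl invr_gt0. Qed.

Lemma ramp1_le m n : (m <= n)%N -> ramp1 m <= ramp1 n.
Proof. by move=> mn; rewrite lerD2l lerN2 lef_pV2 ?posrE ?ltr0n // ler_nat. Qed.
End ramp1.

Section orlicz_function.
Context {R : realType} {Phi : R -> R} (hPhi : orlicz_fun Phi).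

Lemma orlicz_ge0 u : 0 <= Phi u.
Proof.
case: hPhi => cvx ev Phi0 _.
have := cvx 2^-1 u (- u); rewrite ev.
have -> : 2^-1 * u + (1 - 2^-1) * - u = 0 by field.
by rewrite Phi0 => /(_ ltac:(lra) ltac:(lra)); lra.
Qed.

Lemma orlicz_le_scale a u : 0 <= a <= 1 -> Phi (a * u) <= a * Phi u.
Proof.
case: hPhi => cvx _ Phi0 _ /andP[a0 a1].
by have := cvx a u 0 a0 a1; rewrite mulr0 addr0 Phi0 mulr0 addr0.
Qed.

Lemma orlicz_norm u : Phi `|u| = Phi u.
Proof. by case: hPhi => _ ev _ _; case: (ger0P u) => // _; exact: ev. Qed.

Lemma orlicz_le u v : `|u| <= `|v| -> Phi u <= Phi v.
Proof.
move=> uv; rewrite -orlicz_norm -(orlicz_norm v).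
have [v0|v0] := eqVneq `|v| 0.
  by move: uv; rewrite v0 normr_le0 => /eqP ->; rewrite normr0.
have vp : 0 < `|v| by rewrite lt0r v0 normr_ge0.
have uv01 : 0 <= `|u| / `|v| <= 1 by rewrite divr_ge0 //= ler_pdivrMr // mul1r.
rewrite -(divfK v0 `|u|); apply: le_trans (orlicz_le_scale _ _ uv01) _.
by rewrite ler_piMl ?orlicz_ge0 //; case/andP: uv01.
Qed.

(* u is the convex combination (2 - t)^-1 (t u) + (1 - (2 - t)^-1) (2 u). *)
Lemma orlicz_ge_scale t u : 0 <= t <= 1 ->
  (2 - t) * Phi u - (1 - t) * Phi (2 * u) <= Phi (t * u).
Proof.
case: hPhi => cvx _ _ _ /andP[t0 t1].
have t2 : 2 - t != 0 by apply/eqP; lra.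
have := cvx (2 - t)^-1 (t * u) (2 * u).
have -> : (2 - t)^-1 * (t * u) + (1 - (2 - t)^-1) * (2 * u) = u by field.
rewrite invr_ge0 invf_le1; try lra.
move=> /(_ ltac:(lra) ltac:(lra)) /(ler_wpM2l (_ : 0 <= 2 - t)).
have -> : (2 - t) * ((2 - t)^-1 * Phi (t * u) + (1 - (2 - t)^-1) * Phi (2 * u)) =
   Phi (t * u) + (1 - t) * Phi (2 * u) by field.
move=> /(_ ltac:(lra)); lra.
Qed.

Lemma measurable_orlicz : measurable_fun setT Phi.
Proof.
have -> : Phi = (fun u => Phi (Num.max u 0) + Phi (Num.min u 0)).
  apply/funext => u; case: hPhi => _ _ Phi0 _.
  by case: (leP u 0) => _; rewrite Phi0 ?addr0 ?add0r.
have max0 (c : R) : 0 <= Num.max c 0 by rewrite le_max lexx orbT.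
have min0 (c : R) : Num.min c 0 <= 0 by rewrite ge_min lexx orbT.
apply: measurable_funD.
  apply: (@nondecreasing_measurable R setT (fun u => Phi (Num.max u 0))) => // a b ab.
  by apply: orlicz_le; rewrite !ger0_norm //; exact: le_max2.
apply: (@nonincreasing_measurable R setT (fun u => Phi (Num.min u 0))) => // a b ab.
by apply: orlicz_le; rewrite !ler0_norm // lerN2; exact: le_min2.
Qed.

Lemma orlicz_ereal_sup_ramp1 u :
  ereal_sup (range (fun n => (Phi (ramp1 n * u))%:E)) = (Phi u)%:E.
Proof.
apply/eqP; rewrite eq_le; apply/andP; split.
  apply: ge_ereal_sup => _ [n _ <-]; rewrite lee_fin; apply: orlicz_le.
  by rewrite normrM ger0_norm ?ramp1_ge0 // ler_piMl // ltW // ramp1_lt1.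
apply/lee_addgt0Pr => e e0.
have [n hn] : exists n : nat, Phi (2 * u) / e < n.+1%:R.
  by exists (Num.truncn (Phi (2 * u) / e)); exact: truncnS_gt.
apply: (@le_trans _ _ ((Phi (ramp1 n * u))%:E + e%:E)%E); last first.
  by rewrite leeD2r //; apply: ereal_sup_ubound; exists n.
rewrite -EFinD lee_fin.
have r01 : 0 <= @ramp1 R n <= 1 by rewrite ramp1_ge0 ltW // ramp1_lt1.
have hr : 1 - ramp1 n = n.+1%:R^-1 :> R by rewrite /ramp1 opprB addrC subrK.
have h1 : (1 - ramp1 n) * Phi (2 * u) <= e.
  by rewrite hr mulrC ler_pdivrMr // [e * _]mulrC ltW // -ltr_pdivrMr.
have h2 : 0 <= (1 - ramp1 n) * Phi u by rewrite hr mulr_ge0 // orlicz_ge0.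
have := orlicz_ge_scale _ u r01; nra.
Qed.
End orlicz_function.

Section orlicz_modular.
Context {R : realType} {d : measure_display} {T : measurableType d}.
Context (mu : {measure set T -> \bar R}) {Phi : R -> R} {x : T -> R}.
Context (hPhi : orlicz_fun Phi) (mx : measurable_fun setT x).

Local Notation I k := (orlicz_modular mu Phi (fun t => k * x t)).

Lemma measurable_orlicz_scale k : measurable_fun setT (fun t => (Phi (k * x t))%:E).
Proof.
apply/measurable_EFinP; apply: measurableT_comp; first exact: measurable_orlicz.
exact: measurable_funM.
Qed.

Lemma orlicz_modular_ge0 k : (0 <= I k)%E.
Proof. by apply: integral_ge0 => t _; rewrite lee_fin orlicz_ge0. Qed.

Lemma orlicz_modular_le j k : `|j| <= `|k| -> (I j <= I k)%E.
Proof.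
move=> jk; apply: ge0_le_integral => //.
- by move=> t _; rewrite lee_fin orlicz_ge0.
- exact: measurable_orlicz_scale.
- exact: measurable_orlicz_scale.
move=> t _; rewrite lee_fin; apply: orlicz_le => //.
by rewrite !normrM ler_wpM2r.
Qed.

Lemma orlicz_modular_ereal_sup_ramp1 k :
  I k = ereal_sup (range (fun n => I (ramp1 n * k))).
Proof.
have Phi_ramp1_le t m n : (m <= n)%N ->
    Phi (ramp1 m * k * x t) <= Phi (ramp1 n * k * x t).
  move=> mn; apply: orlicz_le => //; rewrite -!mulrA !(normrM (ramp1 _)).
  by rewrite ler_wpM2r // !ger0_norm ?ramp1_ge0 ?ramp1_le.
have ndI : nondecreasing_seq (fun n => I (ramp1 n * k)).
  move=> m n mn; apply: ge0_le_integral => //.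
  - by move=> t _; rewrite lee_fin orlicz_ge0.
  - exact: measurable_orlicz_scale.
  - exact: measurable_orlicz_scale.
  by move=> t _; rewrite lee_fin; exact: Phi_ramp1_le.
rewrite -(cvg_lim _ (ereal_nondecreasing_cvgn ndI)) //.
rewrite /orlicz_modular -monotone_convergence //.
- apply: eq_integral => t _; apply/esym/cvg_lim => //.
  rewrite -(orlicz_ereal_sup_ramp1 hPhi (k * x t)).
  under eq_fun do rewrite -mulrA.
  apply: ereal_nondecreasing_cvgn => m n mn; rewrite lee_fin !mulrA.
  exact: Phi_ramp1_le.
- by move=> n; exact: measurable_orlicz_scale.
- by move=> n t _; rewrite lee_fin orlicz_ge0.
- by move=> t _ m n mn; rewrite lee_fin; exact: Phi_ramp1_le.
Qed.

Lemma measurable_ge_norm e : measurable [set t | e <= `|x t|].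
Proof.
have -> : [set t | e <= `|x t|] = (fun t => `|x t|) @^-1` `[e, +oo[.
  by apply/seteqP; split => t /=; rewrite in_itv /= andbT.
by rewrite -[_ @^-1` _]setTI; apply: measurableT_comp => //; exact: measurable_itv.
Qed.

Lemma not_ae_eq0_ge_norm : ~ {ae mu, forall t, x t = 0} ->
  exists2 e, 0 < e & mu [set t | e <= `|x t|] != 0%E.
Proof.
move=> nae; apply: contra_notP nae => H.
have mu0 n : mu [set t | n.+1%:R^-1 <= `|x t|] = 0%E.
  by apply/eqP; apply: contra_notP H => /negP ?; exists n.+1%:R^-1.
apply: (@negligibleS _ _ _ mu (\bigcup_n [set t | n.+1%:R^-1 <= `|x t|])).
  move=> t /= /eqP xt0; exists (Num.truncn `|x t|^-1) => //=.
  rewrite -[leRHS]invrK lef_pV2 ?posrE ?invr_gt0 ?normr_gt0 //.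
  exact/ltW/truncnS_gt.
by apply: negligible_bigcup => n; exists [set t | n.+1%:R^-1 <= `|x t|]; split;
  rewrite ?mu0 //; exact: measurable_ge_norm.
Qed.

Lemma orlicz_modular_ge_norm e k : 0 <= e ->
  ((Phi (k * e))%:E * mu [set t | (e <= `|x t|)%R] <= I k)%E.
Proof.
move=> e0; have Phi0 := orlicz_ge0 hPhi (k * e).
rewrite -(setIT [set t | e <= `|x t|]) -integral_indic //; last exact: measurable_ge_norm.
rewrite -(integralZl_indic _ (fun _ => [set t | e <= `|x t|])) //; last first.
- exact: measurable_ge_norm.
- by move=> Phi_lt0; move: Phi0; rewrite leNgt Phi_lt0.
apply: ge0_le_integral => //.
- by move=> t _; rewrite lee_fin mulr_ge0.
- apply/measurable_EFinP; apply: measurable_funM => //.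
  exact/measurable_indic/measurable_ge_norm.
- exact: measurable_orlicz_scale.
move=> t _; rewrite lee_fin indicE.
have [/= et|] := boolP (t \in _); last by rewrite mulr0 orlicz_ge0.
rewrite mulr1; apply: orlicz_le => //; rewrite !normrM ler_wpM2l //.
by rewrite ger0_norm //; move: et; rewrite inE.
Qed.
End orlicz_modular.

Definition orlicz_p_term {R : realType} {d : measure_display} {T : measurableType d}
    (mu : {measure set T -> \bar R}) (Phi : R -> R) (p : R * R -> R) (x : T -> R)
    (k : R) : \bar R :=
  ((k^-1)%:E * p_ext p (orlicz_modular mu Phi (fun t => (k * x t)%R)))%E.

Section orlicz_p_term.
Context {R : realType} {d : measure_display} {T : measurableType d}.
Context (mu : {measure set T -> \bar R}) {Phi : R -> R} {p : R * R -> R} {x : T -> R}.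
Context (hPhi : orlicz_fun Phi) (mx : measurable_fun setT x).
Context (hp : lattice_norm p) (p10 : p (1, 0) = 1).

Local Notation I k := (orlicz_modular mu Phi (fun t => k * x t)).
Local Notation F := (orlicz_p_term mu Phi p x).

Lemma orlicz_p_term_ge_inv k : 0 < k -> ((k^-1)%:E <= F k)%E.
Proof.
move=> k0; rewrite -[X in (X <= _)%E]mule1; apply: lee_wpmul2l.
  by rewrite lee_fin invr_ge0 ltW.
exact: (p_ext_ge1 hp _ p10 (orlicz_modular_ge0 mu hPhi _)).
Qed.

Lemma orlicz_p_term_ereal_inf_ge0 : (0 <= ereal_inf (F @` [set k | (0 < k)%R]))%E.
Proof.
apply/ereal_infP => _ [k k0 <-]; apply: le_trans (orlicz_p_term_ge_inv _ k0).
by rewrite lee_fin invr_ge0 ltW.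
Qed.

Lemma orlicz_p_term_ereal_inf_fin_num lam : 0 < lam -> (I lam < +oo)%E ->
  ereal_inf (F @` [set k | 0 < k]) \is a fin_num.
Proof.
move=> lam0 I_lam; rewrite ge0_fin_numE ?orlicz_p_term_ereal_inf_ge0 //.
apply: le_lt_trans (_ : _ <= F lam)%E _; first by apply: ereal_inf_lbound; exists lam.
move: I_lam (orlicz_modular_ge0 mu hPhi (x := x) lam); rewrite /orlicz_p_term.
by case: orlicz_modular => // r _ _; rewrite -EFinM ltry.
Qed.

Lemma orlicz_p_term_lsc l : 0 < l -> lower_semicontinuous_at F l.
Proof.
move=> l0; apply: (@lower_semicontinuous_atVM _ (fun k => p_ext p (I k))) => //.
  move=> k _; apply: (@lt_le_trans _ _ 1%E) => //.
  exact: (p_ext_ge1 hp _ p10 (orlicz_modular_ge0 mu hPhi _)).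
apply: nondecreasing_lower_semicontinuous_at.
  move=> j k j0 jk; apply: (p_ext_le hp); first exact: (orlicz_modular_ge0 mu hPhi).
  by apply: (orlicz_modular_le mu hPhi mx); rewrite !ger0_norm // (le_trans j0).
move=> c /(p_ext_gt_left hp _ _ (orlicz_modular_ge0 mu hPhi _)) [y yI hy].
rewrite (orlicz_modular_ereal_sup_ramp1 mu hPhi mx) in yI.
have [_ [n _ <-] yn] := ereal_sup_gt yI.
exists (ramp1 n * l); last exact: hy.
by rewrite mulr_ge0 ?ramp1_ge0 ?ltW //= gtr_pMl // ramp1_lt1.
Qed.

Lemma orlicz_p_term_cvgy : ~ {ae mu, forall t, x t = 0} ->
  Phi u / u @[u --> +oo] --> +oo ->
  forall c, \forall k \near +oo, (c%:E < F k)%E.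
Proof.
move=> nae Phi_sup c.
have [e e0 mu_e] := not_ae_eq0_ge_norm mu mx nae.
have [w w0 w_le] : exists2 w, 0 < w & (w%:E <= mu [set t | (e <= `|x t|)%R])%E.
  have : (0 < mu [set t | (e <= `|x t|)%R])%E by rewrite lt0e mu_e measure_ge0.
  by case: (mu _) => [r||] //; rewrite ?lte_fin => r0; [exists r | exists 1; rewrite ?leey].
have p01 := lattice_norm01_gt0 hp.
pose A := (`|c| + 1) / (p (0, 1) * w * e).
have P0 : 0 < p (0, 1) * w * e by rewrite !mulr_gt0.
have /cvgryPgt/(_ A) A_lt : Phi (k * e) / (k * e) @[k --> +oo] --> +oo.
  exact: (cvg_comp _ _ (gt0_cvgMly e0 cvg_id) Phi_sup).
near=> k.
have k0 : 0 < k by near: k; exact: nbhs_pinfty_gt.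
have I_ge : ((Phi (k * e) * w)%:E <= I k)%E.
  apply: le_trans _ (orlicz_modular_ge_norm mu hPhi mx _ k (ltW e0)).
  by rewrite EFinM; apply: lee_wpmul2l => //; rewrite lee_fin orlicz_ge0.
apply: (@lt_le_trans _ _ (k^-1 * (p (0, 1) * (Phi (k * e) * w)))%:E).
  have -> : k^-1 * (p (0, 1) * (Phi (k * e) * w)) =
      Phi (k * e) / (k * e) * (p (0, 1) * w * e) by field; rewrite !gt_eqF.
  have cA : `|c| + 1 = A * (p (0, 1) * w * e) by rewrite divfK ?gt_eqF.
  have : A * (p (0, 1) * w * e) < Phi (k * e) / (k * e) * (p (0, 1) * w * e).
    by rewrite ltr_pM2r //; near: k; exact: A_lt.
  rewrite lte_fin; have := ler_norm c; lra.
rewrite !EFinM; apply: lee_wpmul2l; first by rewrite lee_fin invr_ge0 ltW.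
apply: le_trans _ (p_ext_ge hp _ (orlicz_modular_ge0 mu hPhi _)).
by apply: lee_wpmul2l; [rewrite lee_fin ltW | rewrite -EFinM].
Unshelve. all: by end_near.
Qed.
End orlicz_p_term.

Theorem lemma1 (R : realType) (d : measure_display) (T : measurableType d)
  (mu : {measure set T -> \bar R})
  (mu_sfin : sigma_finite setT mu) (mu_compl : measure_is_complete mu)
  (p : R * R -> R) (Phi : R -> R) :
  lattice_norm p -> p (1, 0) = 1 ->
  orlicz_fun Phi ->
  Phi u / u @[u --> +oo] --> +oo ->
  forall x : T -> R, in_orlicz_space mu Phi x ->
  ~ {ae mu, forall t, x t = 0} ->
  exists l : R, 0 < l /\
    orlicz_p_norm mu Phi p x =
      ((l^-1)%:E * p_ext p (orlicz_modular mu Phi (fun t => (l * x t)%R)))%E.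
Proof.
move=> hp p10 hPhi Phi_sup x [mx [lam [lam0 I_lam]]] nae.
pose F := orlicz_p_term mu Phi p x.
have F_ge_inv k : 0 < k -> ((k^-1)%:E <= F k)%E by exact: orlicz_p_term_ge_inv.
set m := ereal_inf (F @` [set k | 0 < k]).
have m_fin : m \is a fin_num by exact: orlicz_p_term_ereal_inf_fin_num I_lam.
set c := fine m + 1.
have c0 : 0 < c by rewrite ltr_wpDl // fine_ge0 // orlicz_p_term_ereal_inf_ge0.
have [b [_ F_gt_c]] := orlicz_p_term_cvgy mu hPhi mx hp nae Phi_sup c.
have [l l0 m_eq] : exists2 l, 0 < l & m = F l.
  apply: (@lower_semicontinuous_ereal_inf_attained _ F _ c^-1 b c).
  - move=> k /=; rewrite in_itv /= => /andP[ck _].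
    by apply: lt_le_trans ck; rewrite invr_gt0.
  - move=> l /andP[cl _]; apply: (orlicz_p_term_lsc mu hPhi mx hp p10).
    by apply: lt_le_trans cl; rewrite invr_gt0.
  - exact: m_fin.
  - by rewrite -/m -(fineK m_fin) lte_fin ltrDl.
  - move=> k k0 Fk; apply/andP; split.
      rewrite -(invrK k) lef_pV2 ?posrE ?invr_gt0 // ltW // -lte_fin.
      exact: le_lt_trans (F_ge_inv _ k0) Fk.
    by rewrite leNgt; apply/negP => /F_gt_c /(lt_trans Fk); rewrite ltxx.
by exists l; split => //; exact: m_eq.
Qed.
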